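(* Let $G$ be a finite group, $\mathbb{F}$ an algebraically closed field of characteristic $p\ge0$, $A=\mathbb{F}G$, and $V$ an $\mathbb{F}G$-module of dimension $n$. For any $p$-regular element $g\in G$, let $\mathbf{s}(g)=(\chi_{S_1}(g),\dots,\chi_{S_{\ell+1}}(g))^T\in\mathbb{C}^{\ell+1}$. Then $\mathbf{s}(g)^TM_V=\chi_V(g)\,\mathbf{s}(g)^T$ and $\mathbf{s}(g)^TL_V=(n-\chi_V(g))\,\mathbf{s}(g)^T$.
   Context: $S_1,\dots,S_{\ell+1}$ are the pairwise non-isomorphic simple $\mathbb{F}G$-modules; modules are finite-dimensional, and $G$ acts diagonally on tensor products. $M_V$ has entries $(M_V)_{i,j}=[S_j\otimes V:S_i]$ (composition multiplicities) and $L_V=nI_{\ell+1}-M_V$. An element is $p$-regular if its order is invertible in $\mathbb{F}$. Writing $\#G=p^aq$ with $\gcd(p,q)=1$ ($q=\#G$ if $p=0$) and fixing an isomorphism $\lambda\mapsto\widehat\lambda$ from $q$-th roots of unity in $\mathbb{F}$ to those in $\mathbb{C}$, the Brauer character of a module $W$ at a $p$-regular $g$ with eigenvalues $\lambda_1,\dots,\lambda_m$ on $W$ is $\chi_W(g)=\sum_i\widehat{\lambda_i}$. *)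

From HB Require Import structures.
From mathcomp Require Import all_boot all_order all_fingroup all_algebra all_solvable all_field.
From mathcomp Require Import all_character.
From Stdlib Require Import ClassicalEpsilon.
Set Implicit Arguments. Unset Strict Implicit. Unset Printing Implicit Defensive.
Import GRing.Theory Num.Theory.
Local Open Scope ring_scope.

Definition fgmod (F : fieldType) (gT : finGroupType) (G : {group gT}) :=
  {k : nat & mx_representation F G k}.

(* [W : S] = k : there is a composition series U of the whole module W
   (last 0 U equals the full space 1%:M) in which exactly k composition
   factors are isomorphic (similar) to S. *)
Definition is_comp_mult (F : fieldType) (gT : finGroupType) (G : {group gT})
    m (rW : mx_representation F G m) k (rS : mx_representation F G k)
    (c : nat) : Prop :=
  exists (U : seq 'M[F]_m) (compU : mx_composition_series rW U),
    (last 0 U :=: 1%:M)%MS /\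
    exists A : {set 'I_(size U)},
      #|A| = c /\ forall i : 'I_(size U), i \in A <-> mx_rsim (series_repr i compU) rS.

(* The composition multiplicity [W : S] (well defined by Jordan-Hoelder). *)
Definition comp_mult (F : fieldType) (gT : finGroupType) (G : {group gT})
    m (rW : mx_representation F G m) k (rS : mx_representation F G k) : nat :=
  epsilon (inhabits 0%N) (is_comp_mult rW rS).

(* Brauer character of rW at g w.r.t. the lifting phi of roots of unity:
   sum of phi over the eigenvalues (with multiplicity) of rW g, i.e. over the
   roots of the characteristic polynomial of rW g. *)
Definition brauer_char (F : closedFieldType) (phi : F -> algC)
    (gT : finGroupType) (G : {group gT}) m (rW : mx_representation F G m)
    (g : gT) : algC :=
  \sum_(z <- sval (closed_field_poly_normal (char_poly (rW g)))) phi z.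

(* q = p'-part of #|G| (q = #|G| in characteristic 0). *)
Definition pprime_order (F : fieldType) (gT : finGroupType) (G : {group gT}) : nat :=
  #|G|`_(predC [pchar F]).
Arguments pprime_order : clear implicits.

Definition MV (F : fieldType) (gT : finGroupType) (G : {group gT}) l
    (S : 'I_l.+1 -> fgmod F G) n (rV : mx_representation F G n) : 'M[algC]_l.+1 :=
  \matrix_(i, j) (comp_mult (prod_repr (projT2 (S j)) rV) (projT2 (S i)))%:R.

Definition LV (F : fieldType) (gT : finGroupType) (G : {group gT}) l
    (S : 'I_l.+1 -> fgmod F G) n (rV : mx_representation F G n) : 'M[algC]_l.+1 :=
  n%:R%:M - MV S rV.

(* s(g) as a row vector (its transpose s(g)^T). *)
Definition svec (F : closedFieldType) (phi : F -> algC) (gT : finGroupType)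
    (G : {group gT}) l (S : 'I_l.+1 -> fgmod F G) (g : gT) : 'rV[algC]_l.+1 :=
  \row_i brauer_char phi (projT2 (S i)) g.

(* Column j of s(g)^T M_V is sum_i [S_j (x) V : S_i] chi_{S_i}(g), the Brauer character of
   S_j (x) V at g: the characteristic polynomial of a module is the product of those of its
   composition factors, so Brauer characters add up along a composition series, and by
   Jordan-Hoelder [S_j (x) V : S_i] counts the factors isomorphic to S_i.  As g is p-regular,
   it acts diagonalizably with q-th roots of unity as eigenvalues, so its eigenvalues on
   S_j (x) V are the products of those on S_j and on V; multiplicativity of the lifting then
   gives chi_{S_j (x) V}(g) = chi_{S_j}(g) chi_V(g). *)

From HB Require Import structures.
From mathcomp Require Import all_boot all_order all_fingroup all_algebra all_solvable all_field.
From mathcomp Require Import all_character.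
From Stdlib Require Import ClassicalEpsilon.
Set Implicit Arguments. Unset Strict Implicit. Unset Printing Implicit Defensive.
Import GRing.Theory Num.Theory.
Local Open Scope ring_scope.

Section CharPoly.
Variable F : fieldType.

Lemma char_poly_similar m n (A : 'M[F]_m) (B : 'M[F]_n) (P : 'M[F]_(m, n)) :
  m = n -> row_free P -> P *m B = A *m P -> char_poly A = char_poly B.
Proof.
move=> emn; subst m => freeP PB_AP; have Pu : P \in unitmx by rewrite -row_free_unit.
have -> : B = invmx P *m A *m P by rewrite -mulmxA -PB_AP mulmxA mulVmx ?mul1mx.
have PiP : map_mx (@polyC F) (invmx P) *m map_mx polyC P = 1%:M.
  by rewrite -map_mxM mulVmx // map_mx1.
have X_conj : ('X%:M : 'M[{poly F}]_n) = map_mx polyC (invmx P) *m 'X%:M *m map_mx polyC P.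
  by rewrite mul_mx_scalar -scalemxAl PiP scalemx1.
rewrite /char_poly /char_poly_mx !map_mxM [in RHS]X_conj -mulmxBl -mulmxBr.
by rewrite !det_mulmx mulrAC -det_mulmx PiP det1 mul1r.
Qed.

Lemma char_poly_lblock m n (A : 'M[F]_m) (B : 'M[F]_n) (C : 'M[F]_(n, m)) :
  char_poly (block_mx A 0 C B) = char_poly A * char_poly B.
Proof.
rewrite /char_poly /char_poly_mx map_block_mx (scalar_mx_block m n).
by rewrite opp_block_mx add_block_mx raddf0 oppr0 addr0 det_lblock.
Qed.

Lemma char_poly_invariant_split m1 m2 n (A1 : 'M[F]_m1) (A2 : 'M[F]_m2) (B : 'M[F]_n)
    (P1 : 'M[F]_(m1, n)) (P2 : 'M[F]_(m2, n)) (C : 'M[F]_(m2, m1)) :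
  (m1 + m2 = n)%N -> row_free (col_mx P1 P2) ->
  P1 *m B = A1 *m P1 -> P2 *m B = C *m P1 + A2 *m P2 ->
  char_poly B = char_poly A1 * char_poly A2.
Proof.
move=> emn freeP P1B P2B; rewrite -(char_poly_lblock A1 A2 C); symmetry.
apply: (char_poly_similar emn freeP).
by rewrite mul_col_mx mul_block_col P1B P2B mul0mx addr0.
Qed.

End CharPoly.

Section CompositionSeries.
Variables (F : fieldType) (gT : finGroupType) (G : {group gT}) (n : nat).
Variable rG : mx_representation F G n.

Lemma mulmx_in_submod (U : 'M[F]_n) m p (A : 'M[F]_(m, p)) (M : 'M[F]_(p, n)) :
  A *m in_submod U M = in_submod U (A *m M).
Proof. exact: mulmxA. Qed.

Lemma char_poly_submod_section X Y (modX : mxmodule rG X) (modY : mxmodule rG Y) x :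
  x \in G -> (X <= Y)%MS ->
  char_poly (submod_repr modY x) =
  char_poly (submod_repr modX x) * char_poly (section_repr modX modY x).
Proof.
move=> Gx sXY.
set S := <<in_factmod X Y>>%MS.
set baseX := @val_submod F n X _ 1%:M.
set liftS := val_factmod (@val_submod F _ S _ 1%:M).
have rankY : (\rank X + \rank S = \rank Y)%N.
  by rewrite genmxE addnC mxrank_in_factmod (addsmx_idPr sXY).
have sbaseY : (baseX <= Y)%MS by rewrite (submx_trans (val_submodP _)).
have sliftY : (liftS <= Y)%MS.
  rewrite -(in_factmodsK sXY) (submx_trans _ (addsmxSr _ _)) // val_factmodS.
  by rewrite (submx_trans (val_submodP _)) // genmxE.
have spanY : (Y <= baseX + liftS)%MS.
  rewrite -(in_factmodsK sXY) addsmxS // ?val_submod1 //.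
  by rewrite /liftS val_factmodS val_submod1 genmxE.
apply: (char_poly_invariant_split (P1 := in_submod Y baseX) (P2 := in_submod Y liftS)
  (C := in_submod X (liftS *m rG x))) => //.
- rewrite /row_free -mul_col_mx mxrank_in_submod ?col_mx_sub ?sbaseY //.
  apply/eqP/anti_leq; rewrite rank_leq_row -addsmxE.
  by rewrite rankY mxrankS.
- rewrite -in_submodJ // mulmx_in_submod; congr (in_submod Y _).
  by rewrite /baseX -(val_submodJ modX) // mul1mx val_submodE.
rewrite -in_submodJ // !mulmx_in_submod -linearD /=; congr (in_submod Y _).
rewrite -{1}(add_sub_fact_mod X (liftS *m rG x)) val_submodE; congr (_ + _).
rewrite in_factmodJ // /liftS val_factmodK [in RHS]val_factmodE mulmxA -val_factmodE.
by rewrite -(val_submodJ (section_module modX modY)) // mul1mx val_submodE.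
Qed.

Lemma mx_series_last_module U : mx_composition_series rG U -> mxmodule rG (last 0 U).
Proof.
move=> compU; have := mx_subseries_module' (size U) (proj1 compU).
by rewrite -[(0 :: U)`_(size U)]/(nth 0 (0 :: U) (size (0 :: U)).-1) nth_last.
Qed.

Lemma char_poly_section_eq X1 Y1 X2 Y2 (modX1 : mxmodule rG X1) (modY1 : mxmodule rG Y1)
    (modX2 : mxmodule rG X2) (modY2 : mxmodule rG Y2) x :
  X1 = X2 -> Y1 = Y2 ->
  char_poly (section_repr modX1 modY1 x) = char_poly (section_repr modX2 modY2 x).
Proof.
move=> eX eY; subst X2 Y2.
by rewrite (bool_irrelevance modX1 modX2) (bool_irrelevance modY1 modY2).
Qed.

Lemma char_poly_series x U (compU : mx_composition_series rG U) L (modL : mxmodule rG L) :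
  x \in G -> L = last 0 U ->
  char_poly (submod_repr modL x) = \prod_(i < size U) char_poly (series_repr i compU x).
Proof.
move=> Gx; elim/last_ind: U compU L modL => [|U V IH] compU L modL eL.
  subst L; rewrite big_ord0; move: (submod_repr _ _); rewrite /= mxrank0 => A.
  exact: det_mx00.
have [compU' modV maxV] := (mx_series_rcons rG U V).1 compU.
have modU := mx_series_last_module compU'.
rewrite last_rcons in eL; subst L.
rewrite (char_poly_submod_section modU modV Gx (ltmxW (proj1 maxV))).
rewrite (IH compU' _ modU erefl) size_rcons big_ord_recr /=; congr (_ * _).
  apply: eq_bigr => i _; apply: char_poly_section_eq => /=.
    by case: i => [[|i] //= ltiU]; rewrite nth_rcons ltnW.
  by rewrite nth_rcons ltn_ord.
apply: char_poly_section_eq; rewrite /= ?nth_rcons ?ltnn ?eqxx //.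
rewrite -rcons_cons nth_rcons /= ltnSn.
by rewrite -[(0 :: U)`_(size U)]/(nth 0 (0 :: U) (size (0 :: U)).-1) nth_last.
Qed.
End CompositionSeries.


Lemma index_allpairs_pair (T1 T2 : eqType) (s1 : seq T1) (s2 : seq T2) x1 x2 :
  uniq s1 -> x1 \in s1 -> x2 \in s2 ->
  index (x1, x2) [seq (a, b) | a <- s1, b <- s2] = (index x1 s1 * size s2 + index x2 s2)%N.
Proof.
have pair_inj a : injective (@pair T1 T2 a) by move=> b c [].
elim: s1 => [|a s1 IH] //= /andP[as1 us1]; rewrite in_cons index_cat.
have [-> _ x2s2|nax1 /= x1s1 x2s2] := eqVneq x1 a.
  by rewrite (map_f (pair a)) // index_map // eqxx.
have -> : ((x1, x2) \in [seq (a, b) | b <- s2]) = false.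
  by apply/mapP => -[b _ [/eqP]]; rewrite (negPf nax1).
by rewrite IH // size_map mulSn addnA.
Qed.

Lemma mxvec_indexE m n (i : 'I_m) (j : 'I_n) : mxvec_index i j = (i * n + j)%N :> nat.
Proof.
have rank_lt : (enum_rank (i, j) < size (enum {: 'I_m * 'I_n}))%N by rewrite -cardE.
rewrite /= -(index_uniq (i, j) rank_lt (enum_uniq _)) nth_enum_rank enumT unlock /=.
by rewrite index_allpairs_pair ?enum_uniq ?mem_enum // size_enum_ord !index_enum_ord.
Qed.

Section Kronecker.
Variable F : fieldType.

Lemma trow_mxvec_index n1 (A : 'rV[F]_n1) m2 n2 (B : 'M[F]_(m2, n2)) k j l :
  trow A B k (mxvec_index j l) = A 0 j * B k l.
Proof.
elim: n1 A j => [|n1 IH] A j; first by case: j.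
rewrite /=; case: (splitP (j : 'I_(1 + n1))) => [j1 e | j1 e].
  have -> : mxvec_index j l = lshift (n1 * n2) l.
    by apply: ord_inj; rewrite mxvec_indexE /= e; case: j1 {e} => [[]].
  rewrite row_mxEl !mxE; congr (A _ _ * _); apply/val_inj => /=.
  by rewrite e; case: j1 {e} => [[]].
have -> : mxvec_index j l = rshift n2 (mxvec_index j1 l).
  apply: ord_inj; rewrite mxvec_indexE -[rshift _ _ : nat]/(n2 + _)%N mxvec_indexE.
  by rewrite e mulSn addnA.
by rewrite row_mxEr IH mxE; congr (A _ _ * _); apply/val_inj.
Qed.

Lemma tprod_mxvec_index m1 n1 (A : 'M[F]_(m1, n1)) m2 n2 (B : 'M[F]_(m2, n2)) i j k l :
  tprod A B (mxvec_index i k) (mxvec_index j l) = A i j * B k l.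
Proof.
elim: m1 A i => [|m1 IH] A i; first by case: i.
rewrite /=; case: (splitP (i : 'I_(1 + m1))) => [i1 e | i1 e].
  have -> : mxvec_index i k = lshift (m1 * m2) k.
    by apply: ord_inj; rewrite mxvec_indexE /= e; case: i1 {e} => [[]].
  rewrite col_mxEu trow_mxvec_index !mxE; congr (A _ _ * _); apply/val_inj => /=.
  by rewrite e; case: i1 {e} => [[]].
have -> : mxvec_index i k = rshift m2 (mxvec_index i1 k).
  apply: ord_inj; rewrite mxvec_indexE -[rshift _ _ : nat]/(m2 + _)%N mxvec_indexE.
  by rewrite e mulSn addnA.
by rewrite col_mxEd IH mxE; congr (A _ _ * _); apply/val_inj.
Qed.

Lemma tprod_is_diag m n (A : 'M[F]_m) (B : 'M[F]_n) :
  is_diag_mx A -> is_diag_mx B -> is_diag_mx (tprod A B).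
Proof.
move=> /is_diag_mxP dA /is_diag_mxP dB; apply/is_diag_mxP.
case/mxvec_indexP=> i k; case/mxvec_indexP=> j l neq_ik_jl.
rewrite tprod_mxvec_index.
have [eij|/dA->] := eqVneq i j; last by rewrite mul0r.
have [ekl|/dB->] := eqVneq k l; last by rewrite mulr0.
by move: neq_ik_jl; rewrite eij ekl eqxx.
Qed.

Lemma tprod_unitmx m n (P : 'M[F]_m) (Q : 'M[F]_n) :
  P \in unitmx -> Q \in unitmx -> tprod P Q \in unitmx.
Proof.
move=> Pu Qu; have : tprod P Q *m tprod (invmx P) (invmx Q) = 1%:M.
  by rewrite -tprodE !mulmxV // tprod1.
by case/mulmx1_unit.
Qed.

Lemma tprod_intertwine m1 n1 m2 n2 (P : 'M[F]_(m1, n1)) (Q : 'M[F]_(m2, n2))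
    (A : 'M[F]_n1) (B : 'M[F]_n2) (C : 'M[F]_m1) (D : 'M[F]_m2) :
  P *m A = C *m P -> Q *m B = D *m Q -> tprod P Q *m tprod A B = tprod C D *m tprod P Q.
Proof. by move=> PA QB; rewrite -!tprodE PA QB. Qed.

End Kronecker.

Section Eigenvalues.
Variable F : closedFieldType.

Definition eigenvalues n (A : 'M[F]_n) : seq F :=
  sval (closed_field_poly_normal (char_poly A)).

Lemma char_poly_eigenvalues n (A : 'M[F]_n) :
  char_poly A = \prod_(z <- eigenvalues A) ('X - z%:P).
Proof.
rewrite /eigenvalues; case: closed_field_poly_normal => r /= ->.
by rewrite (monicP (char_poly_monic _)) scale1r.
Qed.

Lemma perm_eigenvalues n (A : 'M[F]_n) r :
  char_poly A = \prod_(z <- r) ('X - z%:P) -> perm_eq (eigenvalues A) r.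
Proof. by rewrite char_poly_eigenvalues; apply: prod_XsubC_eq. Qed.

Lemma eigenvalues_trig n (A : 'M[F]_n) :
  is_trig_mx A -> perm_eq (eigenvalues A) [seq A i i | i <- enum 'I_n].
Proof.
by move=> trigA; apply: perm_eigenvalues; rewrite char_poly_trig // big_map big_enum.
Qed.

Lemma root_char_poly_unity n (A : 'M[F]_n) k z :
  A ^+ k = 1 -> root (char_poly A) z -> z ^+ k = 1.
Proof.
move=> Ak; rewrite -eigenvalue_root_char => /eigenvalueP[v vA nz_v].
have vAj j : v *m A ^+ j = z ^+ j *: v.
  elim: j => [|j IHj]; first by rewrite !expr0 mulmx1 scale1r.
  by rewrite exprSr -mulmxE mulmxA IHj -scalemxAl vA scalerA -exprSr.
apply/eqP; have /eqP := vAj k; rewrite Ak mulmx1 -subr_eq0 -{1}[v]scale1r -scalerBl.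
by rewrite scalemx_eq0 (negPf nz_v) orbF subr_eq0 eq_sym.
Qed.

Lemma unity_diagonalizable n (A : 'M[F]_n) k : A ^+ k = 1 -> k%:R != 0 :> F ->
  exists2 P, P \in unitmx & is_diag_mx (P *m A *m invmx P).
Proof.
case: n A => [|n] A Ak kF.
  by exists 1%:M; [exact: unitmx1 | apply/is_diag_mxP => -[]].
have k_gt0 : (0 < k)%N by case: k kF Ak => //; rewrite eqxx.
have [r Xk_r] := closed_field_poly_normal ('X^k - 1 : {poly F}).
rewrite (monicP (monic_Xn_sub_1 _ k_gt0)) scale1r in Xk_r.
(* [mxred] shadows the [mxpoly] notions of diagonalizability, hence the qualified names. *)
suff /(mxpoly.diagonalizableP A)[P Pu] :
    exists2 rs, uniq rs & mxminpoly A %| \prod_(z <- rs) ('X - z%:P).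
  by rewrite /simmx_to_for mxpoly.conjumx //; exists P.
exists r; first by rewrite -separable_prod_XsubC -Xk_r separable_Xn_sub_1.
rewrite -Xk_r; apply: mxminpoly_min.
by rewrite rmorphB /= rmorphXn /= horner_mx_X rmorph1 Ak subrr.
Qed.

Lemma root_char_poly_trig n (A : 'M[F]_n) i : is_trig_mx A -> root (char_poly A) (A i i).
Proof.
by move=> trigA; rewrite char_poly_trig // (bigD1 i) //= rootM root_XsubC eqxx.
Qed.

Variable phi : F -> algC.

Definition eigen_sum n (A : 'M[F]_n) : algC := \sum_(z <- eigenvalues A) phi z.

Lemma eigen_sum_char_poly m n (A : 'M[F]_m) (B : 'M[F]_n) :
  char_poly A = char_poly B -> eigen_sum A = eigen_sum B.
Proof.
by move=> eAB; apply/perm_big/perm_eigenvalues; rewrite eAB char_poly_eigenvalues.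
Qed.

Lemma eigen_sum_trig n (A : 'M[F]_n) : is_trig_mx A -> eigen_sum A = \sum_i phi (A i i).
Proof.
by move=> trigA; rewrite /eigen_sum (perm_big _ (eigenvalues_trig trigA)) big_map big_enum.
Qed.

Lemma eigen_sum_char_poly_prod m N (A : 'M[F]_m) (d : 'I_N -> nat)
    (B : forall i, 'M[F]_(d i)) :
  char_poly A = \prod_i char_poly (B i) -> eigen_sum A = \sum_i eigen_sum (B i).
Proof.
move=> cpA; rewrite /eigen_sum (perm_big (flatten [seq eigenvalues (B i) | i <- enum 'I_N])).
  by rewrite big_flatten big_map big_enum.
apply: perm_eigenvalues; rewrite cpA big_flatten big_map big_enum.
by apply: eq_bigr => i _; apply: char_poly_eigenvalues.
Qed.

Lemma eigen_sum_tprod_diag m n (D : 'M[F]_m) (E : 'M[F]_n) :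
  is_diag_mx D -> is_diag_mx E ->
  (forall i j, phi (D i i * E j j) = phi (D i i) * phi (E j j)) ->
  eigen_sum (tprod D E) = eigen_sum D * eigen_sum E.
Proof.
move=> dD dE phiM.
rewrite !eigen_sum_trig ?is_diag_mx_is_trig ?tprod_is_diag // big_distrlr pair_bigA.
rewrite (reindex (fun p : 'I_m * 'I_n => mxvec_index p.1 p.2)) /=; last first.
  case: (curry_mxvec_bij m n) => g gK1 gK2.
  exists g => [[i j] _ | x _]; first exact: (gK1 (i, j)).
  by have := gK2 x isT; case: (g x).
by apply: eq_bigr => -[i j] _; rewrite tprod_mxvec_index phiM.
Qed.

Lemma eigen_sum_tprod m n (A : 'M[F]_m) (B : 'M[F]_n) k :
  A ^+ k = 1 -> B ^+ k = 1 -> k%:R != 0 :> F ->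
  (forall x y, x ^+ k = 1 -> y ^+ k = 1 -> phi (x * y) = phi x * phi y) ->
  eigen_sum (tprod A B) = eigen_sum A * eigen_sum B.
Proof.
move=> Ak Bk kF phiM.
have [P Pu dD] := unity_diagonalizable Ak kF; set D := P *m A *m invmx P in dD.
have [Q Qu dE] := unity_diagonalizable Bk kF; set E := Q *m B *m invmx Q in dE.
have PA : P *m A = D *m P by rewrite mulmxKV.
have QB : Q *m B = E *m Q by rewrite mulmxKV.
have cpD : char_poly D = char_poly A by apply: char_poly_similar PA; rewrite ?row_free_unit.
have cpE : char_poly E = char_poly B by apply: char_poly_similar QB; rewrite ?row_free_unit.
rewrite -(eigen_sum_char_poly cpD) -(eigen_sum_char_poly cpE) -eigen_sum_tprod_diag //.
  apply/eigen_sum_char_poly/esym/(char_poly_similar erefl _ (tprod_intertwine PA QB)).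
  by rewrite row_free_unit tprod_unitmx.
move=> i j; apply: phiM.
  by apply: (root_char_poly_unity Ak); rewrite -cpD root_char_poly_trig ?is_diag_mx_is_trig.
by apply: (root_char_poly_unity Bk); rewrite -cpE root_char_poly_trig ?is_diag_mx_is_trig.
Qed.

End Eigenvalues.

Section BrauerCharacters.
Variables (F : closedFieldType) (phi : F -> algC) (gT : finGroupType) (G : {group gT}).

Lemma brauer_charE n (rW : mx_representation F G n) x :
  brauer_char phi rW x = eigen_sum phi (rW x).
Proof. by []. Qed.

Lemma char_poly_rsim m n (r1 : mx_representation F G m) (r2 : mx_representation F G n) x :
  x \in G -> mx_rsim r1 r2 -> char_poly (r1 x) = char_poly (r2 x).
Proof.
by move=> Gx [B emn freeB r1B]; apply: (char_poly_similar emn freeB); rewrite r1B.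
Qed.

Lemma brauer_char_rsim m n (r1 : mx_representation F G m) (r2 : mx_representation F G n) x :
  x \in G -> mx_rsim r1 r2 -> brauer_char phi r1 x = brauer_char phi r2 x.
Proof. by move=> Gx /(char_poly_rsim Gx)/(eigen_sum_char_poly phi). Qed.

Lemma brauer_char_series n (rW : mx_representation F G n) U
    (compU : mx_composition_series rW U) x :
  x \in G -> (last 0 U :=: 1%:M)%MS ->
  brauer_char phi rW x = \sum_(i < size U) brauer_char phi (series_repr i compU) x.
Proof.
move=> Gx lastU; have modL := mx_series_last_module compU.
rewrite brauer_charE; apply: eigen_sum_char_poly_prod.
by rewrite -(char_poly_rsim Gx (rsim_submod1 modL lastU)) (char_poly_series compU modL Gx).
Qed.

Lemma comp_multE n (rW : mx_representation F G n) U (compU : mx_composition_series rW U)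
    k (rS : mx_representation F G k) (A : {set 'I_(size U)}) :
  (last 0 U :=: 1%:M)%MS -> (forall i, i \in A <-> mx_rsim (series_repr i compU) rS) ->
  comp_mult rW rS = #|A|.
Proof.
(* [comp_mult] counts along the series chosen by [epsilon]; Jordan-Hoelder matches it with [U]. *)
move=> lastU defA; rewrite /comp_mult.
have [|V [compV [lastV [B [<- defB]]]]] := epsilon_spec (inhabits 0%N) (is_comp_mult rW rS).
  by exists #|A|, U, compU; split=> //; exists A.
have [eUV [p rsim_p]] := mx_JordanHolder compU compV (eqmx_trans lastU (eqmx_sym lastV)).
pose f i := cast_ord eUV (p i).
have bij_f : bijective f.
  exists (fun j => p^-1 (cast_ord (esym eUV) j))%g => i.
    by rewrite /f cast_ordK permK.
  by rewrite /f permKV cast_ordKV.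
rewrite -(on_card_preimset (f := f) (onW_bij _ bij_f)); congr #|pred_of_set _|.
apply/setP => i; rewrite inE; apply/idP/idP => [/defB | /defA] rsimS.
  by apply/defA/(mx_rsim_trans (rsim_p i)).
by apply/defB/(mx_rsim_trans (mx_rsim_sym (rsim_p i))).
Qed.

Lemma brauer_char_prod_repr m n (r1 : mx_representation F G m)
    (r2 : mx_representation F G n) g :
  g \in G -> p_elt (predC [pchar F]) g ->
  (forall x y : F, x ^+ pprime_order F gT G = 1 -> y ^+ pprime_order F gT G = 1 ->
     phi (x * y) = phi x * phi y) ->
  brauer_char phi (prod_repr r1 r2) g = brauer_char phi r1 g * brauer_char phi r2 g.
Proof.
move=> Gg g_reg phiM.
have /dvdnP[c def_q] : (#[g]%g %| pprime_order F gT G)%N.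
  by rewrite /pprime_order -(part_pnat_id g_reg) partn_dvd ?cardG_gt0 ?order_dvdG.
have unity_q (z : F) : z ^+ #[g]%g = 1 -> z ^+ pprime_order F gT G = 1.
  by move=> zg; rewrite def_q mulnC exprM zg expr1n.
have repr_order k (r : mx_representation F G k) : r g ^+ #[g]%g = 1.
  case: k r => [|k] r; first by apply/matrixP => -[].
  by rewrite -repr_mxX // expg_order repr_mx1.
apply: eigen_sum_tprod (repr_order _ r1) (repr_order _ r2) _ _.
  by rewrite natf_neq0_pchar.
by move=> x y /unity_q xq /unity_q yq; apply: phiM.
Qed.

End BrauerCharacters.

Section IrreducibleDecomposition.
Variables (F : closedFieldType) (phi : F -> algC) (gT : finGroupType) (G : {group gT}).
Variables (l : nat) (S : 'I_l.+1 -> fgmod F G).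
Hypothesis S_noniso : forall i j, i != j -> ~ mx_rsim (projT2 (S i)) (projT2 (S j)).
Hypothesis S_all : forall k (rT : mx_representation F G k),
  mx_irreducible rT -> exists i, mx_rsim (projT2 (S i)) rT.

Lemma brauer_char_comp_mult n (rW : mx_representation F G n) x : x \in G ->
  brauer_char phi rW x =
  \sum_i (comp_mult rW (projT2 (S i)))%:R * brauer_char phi (projT2 (S i)) x.
Proof.
(* [mx_Schreier] provides a composition series only [classically], i.e. for boolean goals. *)
move=> Gx; apply/eqP; apply: (@mx_Schreier _ _ _ _ rW [::]) => // -[U [compU lastU _]].
apply/eqP; have /fin_all_exists[type rsim_type] (k : 'I_(size U)) :
    exists i, mx_rsim (projT2 (S i)) (series_repr k compU).
  exact/S_all/mx_series_repr_irr.
have comp_mult_type i : comp_mult rW (projT2 (S i)) = #|[set k | type k == i]|.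
  apply: comp_multE => // k; rewrite inE; split=> [/eqP <- | rsim_ki].
    exact: mx_rsim_sym.
  case: eqVneq => // /S_noniso; case; exact: mx_rsim_trans (rsim_type k) rsim_ki.
rewrite (brauer_char_series phi compU Gx lastU) (partition_big type xpredT) //=.
apply: eq_bigr => i _; rewrite comp_mult_type cardsE mulr_natl -sumr_const.
by apply: eq_bigr => k /eqP <-; apply/brauer_char_rsim/mx_rsim_sym.
Qed.

End IrreducibleDecomposition.

Theorem proposition3p4 (F : closedFieldType) (gT : finGroupType) (G : {group gT})
    (l : nat) (S : 'I_l.+1 -> fgmod F G)
    (S_irr : forall i, mx_irreducible (projT2 (S i)))
    (S_noniso : forall i j, i != j -> ~ mx_rsim (projT2 (S i)) (projT2 (S j)))
    (S_all : forall k (rT : mx_representation F G k),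
        mx_irreducible rT -> exists i, mx_rsim (projT2 (S i)) rT)
    (phi : F -> algC)
    (phi_M : forall x y : F, x ^+ pprime_order F gT G = 1 -> y ^+ pprime_order F gT G = 1 ->
        phi (x * y) = phi x * phi y)
    (phi_inj : forall x y : F, x ^+ pprime_order F gT G = 1 -> y ^+ pprime_order F gT G = 1 ->
        phi x = phi y -> x = y)
    (phi_root : forall x : F, x ^+ pprime_order F gT G = 1 -> phi x ^+ pprime_order F gT G = 1)
    (phi_surj : forall z : algC, z ^+ pprime_order F gT G = 1 ->
        exists2 x : F, x ^+ pprime_order F gT G = 1 & phi x = z)
    (n : nat) (rV : mx_representation F G n)
    (g : gT) (Gg : g \in G) (g_preg : p_elt (predC [pchar F]) g) :
  svec phi S g *m MV S rV = brauer_char phi rV g *: svec phi S g /\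
  svec phi S g *m LV S rV = (n%:R - brauer_char phi rV g) *: svec phi S g.
Proof.
have sM : svec phi S g *m MV S rV = brauer_char phi rV g *: svec phi S g.
  apply/rowP => j; rewrite !mxE; under eq_bigr => i _ do rewrite !mxE.
  rewrite mulrC -(brauer_char_prod_repr _ _ Gg g_preg phi_M).
  rewrite (brauer_char_comp_mult phi S_noniso S_all _ Gg).
  by apply: eq_bigr => i _; rewrite mulrC.
by split=> //; rewrite /LV mulmxBr mul_mx_scalar sM scalerBl.
Qed.
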